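(* There is a family $\mathcal{H}$ of countably infinite $G_\delta$-subsets of the Euclidean real line $\mathbb{R}$ such that $|\mathcal{H}|=\mathfrak{c}$ and any two distinct members of $\mathcal{H}$ are non-homeomorphic as subspaces of $\mathbb{R}$.
   Context: $\mathfrak{c}=|\mathbb{R}|$. *)

From HB Require Import structures.
From mathcomp Require Import all_boot all_order all_algebra.
From mathcomp Require Import all_classical all_reals all_analysis.
Set Implicit Arguments. Unset Strict Implicit. Unset Printing Implicit Defensive.
Import Order.TTheory GRing.Theory Num.Theory.
Import numFieldTopology.Exports numFieldNormedType.Exports.
Local Open Scope classical_set_scope.
Local Open Scope ring_scope.

Definition Gdelta (R : realType) (A : set R) : Prop :=
  exists U : nat -> set R, (forall n, open (U n)) /\ A = \bigcap_n U n.

Definition countably_infinite (T : Type) (A : set T) : Prop :=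
  countable A /\ infinite_set A.

Definition homeomorphic_subspaces (R : realType) (A B : set R) : Prop :=
  exists f g : R -> R,
    [/\ set_fun A B f, set_fun B A g,
        {in A, cancel f g}, {in B, cancel g f} &
        {within A, continuous f} /\ {within B, continuous g}].

From HB Require Import structures.
From mathcomp Require Import all_boot all_order all_algebra.
From mathcomp Require Import all_classical all_reals all_analysis.
From mathcomp Require Import ring lra.
Import Order.TTheory GRing.Theory Num.Theory.
Import numFieldTopology.Exports numFieldNormedType.Exports.
Local Open Scope classical_set_scope.
Local Open Scope card_scope.
Set Implicit Arguments. Unset Strict Implicit.

(* Let A^(m) be the m-th Cantor-Bendixson derivative of a set A of reals
   (computed inside A), and call p in A a bad point if no neighbourhood of p in A
   is compact.  Both notions are preserved by homeomorphisms, so the set of m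
   such that A has a bad point in A^(m) \ A^(m+1) is a topological invariant.
   Let K_m be the closed countable set of rank m built by placing shrunken copies
   of K_(m-1) on a sequence converging to 0, and remove from K_(m+1) the top-level
   copies of 0, i.e. its points of rank m other than 0: for m >= 1 what is left
   is a countable G_delta set G_m whose only bad point is 0, of rank exactly m.
   Gluing disjoint copies of the G_m for m in S gives a countable G_delta set
   with invariant S; coding each real r by the Dedekind cut {q < r} of an
   enumeration of the rationals yields continuum many pairwise non-homeomorphic
   such sets. *)

Section Invariant.
Local Open Scope ring_scope.
Variable R : realType.
Implicit Types (A B : set R) (x y : R).

Definition limit_pt A x :=
  forall e : R, 0 < e -> exists a, [/\ A a, a <> x & `|a - x| < e].

Definition derived A := [set x | A x /\ limit_pt A x].

Definition derivedn A n := iter n derived A.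

Definition continuous_on A (f : R -> R) := forall x, A x -> forall e : R, 0 < e ->
  exists2 d : R, 0 < d & forall a, A a -> `|a - x| < d -> `|f a - f x| < e.

Definition homeo A B f g :=
  [/\ (forall x, A x -> B (f x)), (forall y, B y -> A (g y)),
      (forall x, A x -> g (f x) = x), (forall y, B y -> f (g y) = y) &
      continuous_on A f /\ continuous_on B g].

(* Sequential form of "no neighbourhood of p in A is compact". *)
Definition not_locally_compact A p := forall e : R, 0 < e -> exists Z : set R,
  [/\ (forall z, Z z -> A z /\ `|z - p| < e), infinite_set Z &
      forall x, A x -> ~ limit_pt Z x].

Definition nlc_point_of_rank m A := exists p,
  [/\ A p, not_locally_compact A p, derivedn A m p & ~ derivedn A m.+1 p].

Lemma openP V :
  open V <-> forall x, V x -> exists2 e : R, 0 < e & forall y, `|y - x| < e -> V y.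
Proof.
rewrite openE; split=> oV x Vx.
  have /nbhs_ballP [e e0 He] := oV x Vx.
  by exists e => // y yx; apply: He; rewrite /ball /= distrC.
have [e e0 He] := oV x Vx; apply/nbhs_ballP; exists e => //= y.
by rewrite /ball /= distrC; exact: He.
Qed.

Lemma closedP A :
  closed A <-> forall y, (forall e : R, 0 < e -> exists a, A a /\ `|a - y| < e) -> A y.
Proof.
rewrite closure_id; split=> [eA y Hy|cA].
  rewrite eA => B /nbhs_ballP [e e0 He]; have [a [Aa ay]] := Hy e e0.
  by exists a; split=> //; apply: He; rewrite /ball /= distrC.
apply/seteqP; split; first exact: subset_closure.
move=> y Ay; apply: cA => e e0.
have [a [Aa ay]] := Ay _ (nbhsx_ballx y e e0).
by exists a; split=> //; rewrite distrC.
Qed.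

Lemma within_continuous_on A f : {within A, continuous f} -> continuous_on A f.
Proof.
rewrite continuous_subspace_in => cf x Ax e e0.
have := cf x (mem_set Ax); rewrite /continuous_at.
move=> /cvgrPdist_lt /(_ e e0).
rewrite /prop_near1 /= -[nbhs (x : subspace A)]/(nbhs_subspace x) -nbhs_subspace_in //.
rewrite /within /= => /nbhs_ballP [d /= d0 H].
exists d => // a Aa ad; rewrite distrC; apply: H => //=.
by rewrite /ball /= distrC.
Qed.

Lemma homeomorphic_subspaces_homeo A B :
  homeomorphic_subspaces A B -> exists f g, homeo A B f g.
Proof.
move=> [f [g [fAB gBA fK gK [cf cg]]]]; exists f, g; split.
- by move=> x Ax; exact: fAB.
- by move=> y By; exact: gBA.
- by move=> x Ax; apply: fK; rewrite inE.
- by move=> y By; apply: gK; rewrite inE.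
- by split; apply: within_continuous_on.
Qed.

Lemma homeo_sym A B f g : homeo A B f g -> homeo B A g f.
Proof. by move=> [h1 h2 h3 h4 [h5 h6]]; split. Qed.

Lemma continuous_onS A B f : B `<=` A -> continuous_on A f -> continuous_on B f.
Proof.
move=> BA cf x Bx e e0; have [d d0 H] := cf x (BA _ Bx) e e0.
by exists d => // a Ba; apply: H; apply: BA.
Qed.

Lemma derived_sub A : derived A `<=` A. Proof. by move=> x []. Qed.

Lemma derivedn_le A k n : (k <= n)%N -> derivedn A n `<=` derivedn A k.
Proof.
move=> /subnK <-; elim: (n - k)%N => [|i IH] //= x /derived_sub.
by rewrite -/(derivedn A (i + k)) => /IH.
Qed.

Lemma derivedn_sub A n : derivedn A n `<=` A.
Proof. exact: (@derivedn_le A 0 n). Qed.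

Lemma homeo_limit_pt A B f g x : homeo A B f g -> A x -> limit_pt A x -> limit_pt B (f x).
Proof.
move=> [fAB _ fK _ [cf _]] Ax lx e e0.
have [d d0 H] := cf x Ax e e0.
have [a [Aa ax ad]] := lx d d0.
exists (f a); split; [exact: fAB| |exact: H].
by move=> fafx; apply: ax; rewrite -(fK a Aa) fafx fK.
Qed.

Lemma homeo_derived A B f g : homeo A B f g -> homeo (derived A) (derived B) f g.
Proof.
move=> hAB; have hBA := homeo_sym hAB.
case: (hAB) => [fAB gBA fK gK [cf cg]]; split.
- by move=> x [Ax lx]; split; [exact: fAB | exact: homeo_limit_pt hAB Ax lx].
- by move=> y [By ly]; split; [exact: gBA | exact: homeo_limit_pt hBA By ly].
- by move=> x [Ax _]; exact: fK.
- by move=> y [By _]; exact: gK.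
- by split; apply: continuous_onS (@derived_sub _) _.
Qed.

Lemma homeo_derivedn A B f g n : homeo A B f g -> homeo (derivedn A n) (derivedn B n) f g.
Proof. by move=> h; elim: n => [|n IH] //=; apply: homeo_derived. Qed.

Lemma homeo_not_locally_compact A B f g p :
  homeo A B f g -> A p -> not_locally_compact A p -> not_locally_compact B (f p).
Proof.
move=> hAB Ap nlc e e0; case: (hAB) => [fAB gBA fK gK [cf cg]].
have [d d0 H] := cf p Ap e e0.
have [Z [ZA Zinf Zno]] := nlc d d0.
have AZ z : Z z -> A z by case/ZA.
exists (f @` Z); split.
- by move=> _ [z Zz <-]; have [Az zd] := ZA z Zz; split; [exact: fAB | exact: H].
- move=> fin; apply: Zinf.
  have -> : Z = g @` (f @` Z).
    apply/seteqP; split=> [z Zz|_ [_ [z Zz <-] <-]]; last by rewrite fK //; exact: AZ.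
    by exists (f z); [exists z | rewrite fK //; exact: AZ].
  exact: finite_image.
- move=> y By ly; apply: (Zno (g y) (gBA y By)) => e' e'0.
  have [d' d'0 H'] := cg y By e' e'0.
  have [_ [[z Zz <-] fzy fzd]] := ly d' d'0.
  exists z; split => //; first by move=> zgy; apply: fzy; rewrite zgy gK.
  by have := H' (f z) (fAB _ (AZ z Zz)) fzd; rewrite fK //; exact: AZ.
Qed.

Lemma homeo_nlc_point_of_rank A B f g m :
  homeo A B f g -> nlc_point_of_rank m A -> nlc_point_of_rank m B.
Proof.
move=> hAB [p [Ap nlc Dp nDp]]; case: (hAB) => [fAB _ fK _ _].
exists (f p); split.
- exact: fAB.
- exact: homeo_not_locally_compact hAB Ap nlc.
- by case: (homeo_derivedn m hAB) => + _ _ _ _; apply.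
- move=> Dfp; apply: nDp; case: (homeo_derivedn m.+1 (homeo_sym hAB)) => + _ _ _ _.
  by move=> /(_ _ Dfp); rewrite fK.
Qed.

Lemma derived_local A A' V : open V -> (forall y, A' y <-> A y /\ V y) ->
  forall y, derived A' y <-> derived A y /\ V y.
Proof.
move=> /openP oV hA y; split.
- move=> [/hA [Ay Vy] ly]; split=> //; split=> // e e0.
  by have [a [/hA [Aa _] ay ad]] := ly e e0; exists a.
- move=> [[Ay ly] Vy]; split; first exact/hA.
  move=> e e0; have [r r0 Hr] := oV y Vy.
  have [a [Aa ay]] := ly (Num.min e r) (ltac:(by rewrite lt_min e0 r0)).
  rewrite lt_min => /andP[ae ar].
  by exists a; split=> //; apply/hA; split=> //; apply: Hr.
Qed.

Lemma derivedn_setI_open A V n : open V ->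
  forall y, derivedn (A `&` V) n y <-> derivedn A n y /\ V y.
Proof. by move=> oV; elim: n => [|n IH] //= y; exact: derived_local. Qed.

(* By Bolzano-Weierstrass a bounded infinite [Z] accumulates at a point of [C]. *)
Lemma closed_near_locally_compact A C q e : 0 < e -> closed C ->
  (forall y, `|y - q| < e -> (A y <-> C y)) -> ~ not_locally_compact A q.
Proof.
move=> e0 /closedP cC hAC nlc.
have [Z [ZA Zinf Zno]] := nlc (e / 2) (ltac:(lra)).
have Zb : bounded_set Z.
  rewrite /= /bounded_near; near=> M => z /ZA [_ hz].
  have : `|z| <= `|q| + e by have := ler_normD (z - q) q; rewrite subrK; lra.
  move/le_trans; apply; near: M; apply: nbhs_pinfty_ge; exact: num_real.
have [z lpz] := infinite_bounded_limit_point_nonempty Zinf Zb.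
have lz : limit_pt Z z.
  move=> e' e'0; have [y [yz Zy By]] := lpz (ball z e') (nbhsx_ballx z e' e'0).
  by exists y; split => //; [exact/eqP | move: By; rewrite /ball /= distrC].
have zq : `|z - q| <= e / 2.
  rewrite leNgt; apply/negP => zq.
  have [a [Za _ ha]] := lz (`|z - q| - e / 2) (ltac:(lra)).
  have [_ haq] := ZA a Za.
  have := ler_normD (z - a) (a - q); rewrite addrA subrK.
  by rewrite distrC in ha; lra.
have Cz : C z.
  apply: cC => e' e'0; have [a [Za _ ha]] := lz e' e'0.
  exists a; split => //; have [Aa ha'] := ZA a Za.
  by apply/hAC => //; lra.
have Az : A z by apply/hAC => //; lra.
exact: Zno Az lz.
Unshelve. all: by end_near.
Qed.

Definition aff (a b x : R) := a + b * x.

Lemma affK a b y : b != 0 -> aff a b ((y - a) / b) = y.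
Proof. by move=> b0; rewrite /aff [b * _]mulrC divfK // addrC subrK. Qed.

Lemma aff_invK a b x : b != 0 -> (aff a b x - a) / b = x.
Proof. by move=> b0; rewrite /aff addrC addKr mulrC mulKf. Qed.

Lemma homeo_aff A a b : b != 0 ->
  homeo A (aff a b @` A) (aff a b) (fun y => (y - a) / b).
Proof.
move=> b0; have b_gt0 : 0 < `|b| by rewrite normr_gt0.
split.
- by move=> x Ax; exists x.
- by move=> _ [x Ax <-]; rewrite aff_invK.
- by move=> x _; exact: aff_invK.
- by move=> y _; exact: affK.
- split=> x _ e e0.
  + exists (e / `|b|); first by rewrite divr_gt0.
    move=> y _ yx; rewrite /aff opprD addrACA subrr add0r -mulrBr normrM.
    by rewrite mulrC -ltr_pdivlMr.
  + exists (e * `|b|); first by rewrite mulr_gt0.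
    move=> y _ yx; rewrite -mulrBl opprB addrA subrK normrM normfV.
    by rewrite ltr_pdivrMr.
Qed.

Lemma derivedn_affE A a b n y : b != 0 ->
  derivedn (aff a b @` A) n y <-> derivedn A n ((y - a) / b).
Proof.
move=> b0; have [h1 h2 h3 h4 _] := homeo_derivedn n (homeo_aff A a b0).
split=> [/h2 //|/h1]; by rewrite affK.
Qed.

Lemma limit_pt_aff Z a b y : b != 0 -> limit_pt (aff a b @` Z) y -> limit_pt Z ((y - a) / b).
Proof.
move=> b0 ly e e0; have b_gt0 : 0 < `|b| by rewrite normr_gt0.
have [_ [[z Zz <-] zy zd]] := ly (e * `|b|) (mulr_gt0 e0 b_gt0).
exists z; split => //; first by move=> zE; apply: zy; rewrite zE affK.
rewrite -(ltr_pM2r b_gt0) -normrM mulrBl divfK //.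
by move: zd; rewrite /aff; congr (_ < _); congr `|_|; ring.
Qed.

Lemma closed_aff A a b : b != 0 -> closed A -> closed (aff a b @` A).
Proof.
move=> b0 /closedP cA; apply/closedP => y H; exists ((y - a) / b); last exact: affK.
apply: cA => e e0; have b_gt0 : 0 < `|b| by rewrite normr_gt0.
have [_ [[x Ax <-] hx]] := H (e * `|b|) (mulr_gt0 e0 b_gt0).
exists x; split => //; rewrite -(ltr_pM2r b_gt0) -normrM mulrBl divfK //.
by move: hx; rewrite /aff; congr (_ < _); congr `|_|; ring.
Qed.

End Invariant.

Section Construction.
Local Open Scope ring_scope.
Variable R : realType.
Implicit Types (A : set R) (x y : R) (S : nat -> Prop).

Definition dyad (j : nat) : R := (2^-1) ^+ j.

Lemma dyad_gt0 j : 0 < dyad j. Proof. by rewrite exprn_gt0. Qed.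

Lemma dyadS j : dyad j.+1 = dyad j / 2. Proof. by rewrite /dyad exprSr. Qed.

Lemma dyad_le i j : (i <= j)%N -> dyad j <= dyad i.
Proof.
move=> /subnK <-; elim: (j - i)%N => [|k IH] //=.
by rewrite addSn dyadS; have := dyad_gt0 (k + i); lra.
Qed.

Lemma dyad_le1 j : dyad j <= 1. Proof. exact: (@dyad_le 0). Qed.

Lemma dyad_le_half i j : (i < j)%N -> dyad j <= dyad i / 2.
Proof. by move=> /dyad_le; rewrite dyadS. Qed.

Lemma dyad_lt_eps (e : R) : 0 < e -> exists j, dyad j < e.
Proof.
have dyad_nat j : j.+1%:R * dyad j <= 1.
  elim: j => [|j IH]; first by rewrite mulr1.
  rewrite dyadS -[j.+2]addn1 natrD.
  have := dyad_gt0 j; have : 1 <= j.+1%:R :> R by rewrite ler1n.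
  nra.
move=> e0; exists (Num.truncn e^-1).
have := truncnS_gt e^-1; set n := (Num.truncn e^-1).+1 => hn.
have := dyad_nat (Num.truncn e^-1); rewrite -/n => hw.
have n_gt0 : 0 < n%:R :> R by rewrite ltr0n.
have : 1 < e * n%:R by rewrite -ltr_pdivrMl // mulrC mul1r.
have := dyad_gt0 (Num.truncn e^-1); nra.
Qed.

(* [shrink j] maps [0, 3/4] into [window j]; the windows are pairwise
   disjoint and accumulate only at [0]. *)
Definition shrink j x := dyad j * (2^-1 + x / 4).
Definition apex j := shrink j 0.
Definition window j := [set x | dyad j * (3 / 8) < x < dyad j * (7 / 8)].

Fixpoint tower (m : nat) : set R :=
  if m is m'.+1 then [set x | x = 0 \/ exists j, exists2 y, tower m' y & x = shrink j y]
  else [set 0].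

Lemma apexE j : apex j = dyad j / 2. Proof. by rewrite /apex /shrink mul0r addr0. Qed.

Lemma apex_gt0 j : 0 < apex j. Proof. by rewrite apexE divr_gt0 // dyad_gt0. Qed.

Lemma shrink_aff j : shrink j = aff (dyad j / 2) (dyad j / 4).
Proof. by apply/funext => x; rewrite /shrink /aff; ring. Qed.

Lemma shrink_slope_neq0 j : dyad j / 4 != 0.
Proof. by rewrite mulf_neq0 // ?invr_eq0 // gt_eqF ?dyad_gt0. Qed.

Lemma shrink_inj j : injective (shrink j).
Proof.
move=> x y h; have : dyad j / 4 * (x - y) = 0.
  by rewrite -[RHS](subrr (shrink j x)) {2}h /shrink; ring.
by move/eqP; rewrite mulf_eq0 (negbTE (shrink_slope_neq0 j)) subr_eq0 => /eqP.
Qed.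

Lemma shrink_bnd j y : 0 <= y <= 3 / 4 -> dyad j / 2 <= shrink j y <= dyad j * (11 / 16).
Proof. by rewrite /shrink; have := dyad_gt0 j; nra. Qed.

Lemma tower0 m : tower m 0. Proof. by case: m => [|m] //=; left. Qed.

Lemma tower_bnd m x : tower m x -> 0 <= x <= 3 / 4.
Proof.
elim: m x => [|m IH] x /=; first by move=> ->; lra.
case=> [->|[j [y /IH hy ->]]]; first lra.
by rewrite /shrink; have := dyad_gt0 j; have := dyad_le1 j; nra.
Qed.

Lemma apex_bnd j : 0 <= apex j <= 3 / 4.
Proof. by apply: (@tower_bnd 1); right; exists j, 0. Qed.

Lemma window_shrink j y : 0 <= y <= 3 / 4 -> window j (shrink j y).
Proof.
move=> /(shrink_bnd j) /andP[h1 h2]; have := dyad_gt0 j => h.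
by apply/andP; split; lra.
Qed.

Lemma window_shrink_eq i j y : 0 <= y <= 3 / 4 -> window j (shrink i y) -> i = j.
Proof.
move=> /(shrink_bnd i) /andP[h1 h2] /andP[h3 h4].
have := dyad_gt0 i; have := dyad_gt0 j => wj wi.
by case: (ltngtP i j) => // hij; exfalso; have := dyad_le_half hij; clear hij; lra.
Qed.

Lemma window_apex j : window j (apex j).
Proof. exact: window_shrink (tower_bnd (tower0 0)). Qed.

Lemma window_apex_eq j k : window j (apex k) -> k = j.
Proof. exact: window_shrink_eq (tower_bnd (tower0 0)). Qed.

Lemma window_open j : open (window j).
Proof. by rewrite /window -set_itvoo; exact: itv_open. Qed.

Lemma window_cover y : 0 < y < 7 / 8 -> exists j, window j y.
Proof.
move=> /andP[y0 y1].
have ex : exists j, dyad j * (7 / 8) <= y.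
  by have [j hj] := dyad_lt_eps y0; exists j; have := dyad_gt0 j; lra.
case: (ex_minnP ex) => j0 hj0 hmin.
have j0_gt0 : (0 < j0)%N by case: j0 hj0 hmin => //; rewrite /dyad expr0; lra.
exists j0.-1; apply/andP; split.
- have : dyad j0 = dyad j0.-1 / 2 by rewrite -dyadS prednK.
  by have := dyad_gt0 j0; lra.
- by rewrite ltNge; apply/negP => /hmin; rewrite -ltnS prednK // ltnn.
Qed.

Lemma tower_window m j x : window j x ->
  (tower m.+1 x <-> exists2 y, tower m y & x = shrink j y).
Proof.
move=> wx; split; last by move=> [y Ky ->]; right; exists j, y.
case=> [x0|[i [y Ky xE]]]; first by move: wx; rewrite /window x0 /=; have := dyad_gt0 j; lra.
exists y => //; rewrite xE; congr shrink; apply: (window_shrink_eq (tower_bnd Ky)).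
by rewrite -xE.
Qed.

Lemma towerS_window m x : tower m.+1 x -> x <> 0 -> exists j, window j x.
Proof.
by case=> // [[j [y Ky ->]]] _; exists j; apply: window_shrink; exact: tower_bnd Ky.
Qed.

Lemma towerI_window m j : tower m.+1 `&` window j = shrink j @` tower m.
Proof.
apply/seteqP; split.
- by move=> x [Kx wx]; have [y Ky ->] := (tower_window m wx).1 Kx; exists y.
- move=> _ [y Ky <-]; have wy := window_shrink j (tower_bnd Ky); split=> //.
  by apply/(tower_window m wy); exists y.
Qed.

Lemma derivedn_tower_window m j r x : window j x ->
  (derivedn (tower m.+1) r x <-> exists2 y, derivedn (tower m) r y & x = shrink j y).
Proof.
move=> wx.
have h : derivedn (tower m.+1) r x <-> derivedn (tower m.+1 `&` window j) r x.
  by rewrite (@derivedn_setI_open _ _ (window j) r (@window_open j)); split=> [?|[]//]; split.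
rewrite h towerI_window shrink_aff derivedn_affE ?shrink_slope_neq0 //; split.
- by move=> hd; eexists; [exact: hd | rewrite affK ?shrink_slope_neq0].
- by move=> [y Dy ->]; rewrite aff_invK ?shrink_slope_neq0.
Qed.

Lemma tower_closed m : closed (tower m).
Proof.
elim: m => [|m IH]; apply/closedP => y H.
  apply/eqP; apply/negPn/negP => y0.
  by have [a [-> ]] := H `|y| (ltac:(by rewrite normr_gt0)); rewrite sub0r normrN ltxx.
have [->|y0] := eqVneq y 0; first by left.
have y_ge0 : 0 <= y.
  rewrite leNgt; apply/negP => yl; have [a [Ka ha]] := H (- y) (ltac:(lra)).
  by move: (tower_bnd Ka) => /andP[a0 _]; move: ha; rewrite ger0_norm; lra.
have y_le : y <= 3 / 4.
  rewrite leNgt; apply/negP => yl; have [a [Ka ha]] := H (y - 3 / 4) (ltac:(lra)).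
  by move: (tower_bnd Ka) => /andP[_ a1]; move: ha; rewrite ltr0_norm; lra.
have [j wy] : exists j, window j y.
  by apply: window_cover; rewrite lt_neqAle eq_sym y0 y_ge0 /=; lra.
have /closedP cT : closed (shrink j @` tower m).
  by rewrite shrink_aff; apply: closed_aff => //; exact: shrink_slope_neq0.
have /openP /(_ y wy) [r r0 Hr] := @window_open j.
have [x Kx <-] : (shrink j @` tower m) y.
  apply: cT => e e0; have [a [Ka ha]] := H (Num.min e r) (ltac:(by rewrite lt_min e0 r0)).
  move: ha; rewrite lt_min => /andP[ae ar].
  by exists a; split=> //; rewrite -towerI_window; split; [exact: Ka | exact: Hr].
by right; exists j, x.
Qed.

Lemma not_limit_pt_sub1 A x : (forall a, A a -> a = x) -> ~ limit_pt A x.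
Proof. by move=> h /(_ 1 ltr01) [a [/h ax ax' _]]. Qed.

Lemma derivedn_tower0 m r : (r <= m)%N -> derivedn (tower m) r 0.
Proof.
elim: m r => [|m IHm] r; first by rewrite leqn0 => /eqP ->; exact: tower0.
elim: r => [|r IHr] hr; first exact: tower0.
split; first by apply: IHr; exact: ltnW.
move=> e e0; have [j wj] := dyad_lt_eps e0.
exists (apex j); split.
- by apply/(derivedn_tower_window m r (window_apex j)); exists 0 => //; exact: IHm.
- exact/eqP/lt0r_neq0/apex_gt0.
- by rewrite subr0 gtr0_norm ?apex_gt0 // apexE; have := dyad_gt0 j; lra.
Qed.

Lemma derivedn_tower_eq0 m x : derivedn (tower m) m x -> x = 0.
Proof.
elim: m x => [|m IH] x // Dx.
have [->//|/eqP x0] := eqVneq x 0.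
have [j wj] := towerS_window (derivedn_sub Dx) x0.
have [y [Dy ly] xE] := (derivedn_tower_window m m.+1 wj).1 Dx.
by rewrite (IH y Dy) in ly; case: (not_limit_pt_sub1 IH ly).
Qed.

(* Removing the apexes from [tower n.+1] lowers the rank of [0] to [n] and
   destroys local compactness there: [shrink j (apex i)] tends to the missing
   [apex j] as [i] grows. *)
Definition gadget n := [set x | tower n.+1 x /\ forall j, x <> apex j].

Definition punctured_window j := [set x | window j x /\ x <> apex j].

Lemma punctured_window_open j : open (punctured_window j).
Proof.
apply/openP => x [wx xs]; have /openP /(_ x wx) [e1 e10 H1] := @window_open j.
have e20 : 0 < `|x - apex j| by rewrite normr_gt0 subr_eq0; apply/eqP.
exists (Num.min e1 `|x - apex j|); first by rewrite lt_min e10 e20.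
move=> y; rewrite lt_min => /andP[h1 h2]; split; first exact: H1.
by move=> ys; move: h2; rewrite ys -normrN opprB; lra.
Qed.

Lemma gadget_punctured n j x : punctured_window j x -> (gadget n x <-> tower n.+1 x).
Proof.
move=> [wx xs]; split=> [[]//|Kx]; split=> // k xk; apply: xs; rewrite xk in wx *.
by rewrite (window_apex_eq wx).
Qed.

Lemma derivedn_gadget_punctured n r j x : punctured_window j x ->
  (derivedn (gadget n) r x <-> derivedn (tower n.+1) r x).
Proof.
move=> px; have pwo := @punctured_window_open j.
have hG := @derivedn_setI_open _ (gadget n) _ r pwo x.
have hT := @derivedn_setI_open _ (tower n.+1) _ r pwo x.
have eGT : gadget n `&` punctured_window j = tower n.+1 `&` punctured_window j.
  by apply/seteqP; split=> y [Gy py]; split=> //; exact/(gadget_punctured n py).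
rewrite eGT in hG; split=> Dx.
- by have /hT [] : derivedn (tower n.+1 `&` punctured_window j) r x by apply/hG.
- by have /hG [] : derivedn (tower n.+1 `&` punctured_window j) r x by apply/hT.
Qed.

Lemma gadget0 n : gadget n 0.
Proof. by split=> [|j /esym]; [exact: tower0 | apply/eqP/lt0r_neq0/apex_gt0]. Qed.

Lemma gadget_bnd n x : gadget n x -> 0 <= x <= 3 / 4.
Proof. by move=> [/tower_bnd]. Qed.

Lemma shrink_apex_gt0 j i : 0 < shrink j (apex i).
Proof. by have /andP[h _] := shrink_bnd j (apex_bnd i); have := dyad_gt0 j; lra. Qed.

Lemma shrink_apex_le j i : shrink j (apex i) <= dyad j.
Proof. by have /andP[_ h] := shrink_bnd j (apex_bnd i); have := dyad_gt0 j; lra. Qed.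

Lemma punctured_window_shrink_apex j i : punctured_window j (shrink j (apex i)).
Proof.
split; first exact: window_shrink (apex_bnd i).
by move/shrink_inj; apply/eqP; rewrite gt_eqF ?apex_gt0.
Qed.

Lemma gadget_shrink_apex n j i : gadget n.+1 (shrink j (apex i)).
Proof.
apply/(gadget_punctured n.+1 (punctured_window_shrink_apex j i)).
by right; exists j, (apex i) => //; right; exists i, 0 => //; exact: tower0.
Qed.

Lemma derivedn_gadget0 n : derivedn (gadget n.+1) n.+1 0.
Proof.
suff : forall r, (r <= n.+1)%N -> derivedn (gadget n.+1) r 0 by apply.
elim=> [|r IHr] hr; first exact: gadget0.
split; first by apply: IHr; exact: ltnW.
move=> e e0; have [j wj] := dyad_lt_eps e0.
exists (shrink j (apex 0)); split.
- apply/(derivedn_gadget_punctured n.+1 r (punctured_window_shrink_apex j 0)).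
  apply/(derivedn_tower_window n.+1 r (window_shrink j (apex_bnd 0))); exists (apex 0) => //.
  apply/(derivedn_tower_window n r (window_apex 0)); exists 0 => //.
  exact: derivedn_tower0.
- exact/eqP/lt0r_neq0/shrink_apex_gt0.
- by rewrite subr0 gtr0_norm ?shrink_apex_gt0 //; have := shrink_apex_le j 0; lra.
Qed.

Lemma derivedn_gadget_eq0 n a : derivedn (gadget n) n a -> a = 0.
Proof.
move=> Da; have [Ka a_apex] := derivedn_sub Da.
have [->//|/eqP a0] := eqVneq a 0.
have [j wa] := towerS_window Ka a0.
have /(derivedn_tower_window n n wa) [y Dy aE] :=
  (derivedn_gadget_punctured n n (conj wa (a_apex j))).1 Da.
by case: (a_apex j); rewrite aE (derivedn_tower_eq0 Dy).
Qed.

Lemma not_derivedn_gadget0 n : ~ derivedn (gadget n) n.+1 0.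
Proof. by move=> [_]; apply: not_limit_pt_sub1; exact: derivedn_gadget_eq0. Qed.

Lemma limit_pt_range_apex y : limit_pt (range apex) y -> y = 0.
Proof.
move=> ly; apply/eqP; apply/negPn/negP => y0.
have [y_lt0|y_ge0] := ltP y 0.
  have [_ [[i _ <-] _ h]] := ly (- y) (ltac:(lra)).
  by have ai := apex_gt0 i; rewrite gtr0_norm in h; lra.
have y_gt0 : 0 < y by rewrite lt0r y0.
have [_ [[i _ <-] si h1]] := ly (y / 4) (ltac:(lra)).
have d0 : 0 < `|apex i - y| by rewrite normr_gt0 subr_eq0; apply/eqP.
have [_ [[k _ <-] sk h2]] := ly `|apex i - y| d0.
have h3 : `|apex k - y| < y / 4 by lra.
move: h1 h3; rewrite !ltr_distl => /andP[a b] /andP[a' b'].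
case: (ltngtP i k) => hik; last by move: h2; rewrite hik ltxx.
- by have := dyad_le_half hik; rewrite !apexE in a b a' b' *; have := dyad_gt0 i; lra.
- by have := dyad_le_half hik; rewrite !apexE in a b a' b' *; have := dyad_gt0 k; lra.
Qed.

Definition offset n : R := (n.*2)%:R.

Definition slot n := [set x | offset n - 2^-1 < x < offset n + 1].

Definition gadget_union S := [set x | exists n, S n /\ gadget n (x - offset n)].

Lemma slot_uniq n k x : slot n x -> slot k x -> n = k.
Proof.
rewrite /slot /offset /= => /andP[a b] /andP[a' b'].
wlog nk : n k a b a' b' / (n < k)%N.
  by move=> wlog_nk; case: (ltngtP n k) => // [/wlog_nk|/wlog_nk /esym]; apply.
exfalso; have : (n.*2 + 2)%N%:R <= (k.*2)%:R :> R by rewrite ler_nat addn2 -doubleS leq_double.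
by rewrite natrD; lra.
Qed.

Lemma slot_of n y : 0 <= y - offset n <= 3 / 4 -> slot n y.
Proof. by move=> /andP[a b]; apply/andP; split; lra. Qed.

Lemma slot_open n : open (slot n).
Proof. by rewrite /slot -set_itvoo; exact: itv_open. Qed.

Lemma gadget_union_slot S n x :
  slot n x -> (gadget_union S x <-> S n /\ gadget n (x - offset n)).
Proof.
move=> sx; split=> [[k [Sk Gk]]|]; last by exists n.
by rewrite (slot_uniq sx (slot_of (gadget_bnd Gk))).
Qed.

Lemma derivedn_gadget_union_slot S n r x : S n -> slot n x ->
  (derivedn (gadget_union S) r x <-> derivedn (gadget n) r (x - offset n)).
Proof.
move=> Sn sx; have := @derivedn_setI_open _ (gadget_union S) _ r (@slot_open n) x.
have -> : gadget_union S `&` slot n = aff (offset n) 1 @` gadget n.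
  apply/seteqP; split.
  - move=> y [Xy sy]; have [_ Gy] := (gadget_union_slot S sy).1 Xy.
    by exists (y - offset n) => //; rewrite /aff mul1r addrC subrK.
  - move=> _ [u Gu <-]; have uE : aff (offset n) 1 u - offset n = u.
      by rewrite /aff mul1r addrC addKr.
    have su : slot n (aff (offset n) 1 u) by apply: slot_of; rewrite uE; exact: gadget_bnd Gu.
    by split=> //; apply/(gadget_union_slot S su); rewrite uE.
rewrite derivedn_affE ?oner_neq0 // divr1 => hD.
by split=> Dx; [apply/hD; split | have [] := hD.1 Dx].
Qed.

Lemma infinite_image_nat (f : nat -> R) : injective f -> infinite_set (range f).
Proof.
move=> fi; apply/infiniteP.
by have /card_eqPle [] := @inj_card_eq _ _ [set: nat] f (in2W fi).
Qed.

Definition translated_apexes n j := range (fun i => offset n + shrink j (apex i)).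

Lemma translated_apexesE n j :
  translated_apexes n j = aff (offset n) 1 @` (shrink j @` range apex).
Proof.
apply/seteqP; split=> [_ [i _ <-]|_ [_ [_ [i _ <-] <-] <-]]; last first.
  by exists i => //; rewrite /aff mul1r.
by exists (shrink j (apex i)); [exists (apex i) => //; exists i | rewrite /aff mul1r].
Qed.

Lemma limit_pt_translated_apexes n j x :
  limit_pt (translated_apexes n j) x -> x = offset n + apex j.
Proof.
rewrite translated_apexesE shrink_aff.
move=> /(limit_pt_aff (oner_neq0 R)) /(limit_pt_aff (shrink_slope_neq0 j)).
move=> /limit_pt_range_apex /eqP; rewrite divr1 mulf_eq0 invr_eq0.
rewrite (negbTE (shrink_slope_neq0 j)) orbF subr_eq0 subr_eq => /eqP ->.
by rewrite apexE addrC.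
Qed.

Lemma not_locally_compact_gadget_union S n :
  S n.+1 -> not_locally_compact (gadget_union S) (offset n.+1).
Proof.
move=> Sn e e0; have [j wj] := dyad_lt_eps e0.
exists (translated_apexes n.+1 j); split.
- move=> _ [i _ <-].
  have -> : offset n.+1 + shrink j (apex i) - offset n.+1 = shrink j (apex i).
    by rewrite addrC addKr.
  split; first by exists n.+1; split=> //; rewrite addrC addKr; exact: gadget_shrink_apex.
  by rewrite gtr0_norm ?shrink_apex_gt0 //; have := shrink_apex_le j i; lra.
- apply: infinite_image_nat => i k /addrI /shrink_inj.
  rewrite !apexE => /(congr1 ( *%R^~ 2)); rewrite !divfK // => dik.
  apply/eqP; apply/negP => /negP ne; have := dyad_gt0 i; have := dyad_gt0 k.
  by case: (ltngtP i k) ne => // hik _; have := dyad_le_half hik; rewrite dik; lra.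
- move=> x Xx /limit_pt_translated_apexes xE.
  have sx : slot n.+1 x by apply: slot_of; rewrite xE addrC addKr; exact: apex_bnd.
  have [_ [_ notapex]] := (gadget_union_slot S sx).1 Xx.
  by apply: (notapex j); rewrite xE addrC addKr.
Qed.

(* Away from the origin of its gadget, [gadget_union S] coincides near [p] with a
   translate of the closed set [tower n.+1]. *)
Lemma gadget_union_locally_compact S n p : S n -> slot n p -> gadget n (p - offset n) ->
  p - offset n <> 0 -> ~ not_locally_compact (gadget_union S) p.
Proof.
move=> Sn sp [Ku not_apex] u0.
have [j wu] := towerS_window Ku u0.
have /openP /(_ _ (conj wu (not_apex j))) [e1 e10 H1] := @punctured_window_open j.
have /openP /(_ _ sp) [e2 e20 H2] := @slot_open n.
have e0 : 0 < Num.min e1 e2 by rewrite lt_min e10 e20.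
apply: (closed_near_locally_compact (C := aff (offset n) 1 @` tower n.+1) e0).
  by apply: closed_aff; [exact: oner_neq0 | exact: tower_closed].
move=> y; rewrite lt_min => /andP[y1 y2].
have sy := H2 y y2.
have py : punctured_window j (y - offset n) by apply: H1; rewrite opprB addrA subrK.
rewrite (gadget_union_slot S sy) (gadget_punctured n py); split.
- by move=> [_ Ky]; exists (y - offset n) => //; rewrite /aff mul1r addrC subrK.
- by move=> [x Kx <-]; split=> //; rewrite /aff mul1r addrC addKr.
Qed.

Lemma nlc_point_of_rank_gadget_union S m : (forall n, S n -> (0 < n)%N) ->
  nlc_point_of_rank m.+1 (gadget_union S) <-> S m.+1.
Proof.
move=> S_gt0; split.
- move=> [p [[n [Sn Gn]] nlc Dp nDp]].
  have sp := slot_of (gadget_bnd Gn).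
  have [u0|/eqP u0] := eqVneq (p - offset n) 0; last first.
    by case: (gadget_union_locally_compact Sn sp Gn u0).
  have hD r : derivedn (gadget_union S) r p <-> derivedn (gadget n) r 0.
    by rewrite -u0; exact: derivedn_gadget_union_slot.
  move/hD: Dp => Dp; have {}nDp : ~ derivedn (gadget n) m.+2 0 by move=> /hD /nDp.
  have n_gt0 := S_gt0 _ Sn.
  case: n n_gt0 Sn Gn sp u0 hD Dp nDp => // n _ Sn _ _ _ _ Dp nDp.
  case: (ltngtP m.+1 n.+1) => [lt|lt|-> //].
  + by case: nDp; apply: (derivedn_le lt); exact: derivedn_gadget0.
  + by case: (@not_derivedn_gadget0 n.+1); apply: (derivedn_le lt).
- move=> Sm; exists (offset m.+1).
  have sm : slot m.+1 (offset m.+1) by apply: slot_of; rewrite subrr; lra.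
  have hD r : derivedn (gadget_union S) r (offset m.+1) <-> derivedn (gadget m.+1) r 0.
    by have := derivedn_gadget_union_slot r Sm sm; rewrite subrr.
  split.
  + by exists m.+1; split=> //; rewrite subrr; exact: gadget0.
  + exact: not_locally_compact_gadget_union.
  + exact/hD/derivedn_gadget0.
  + by move/hD; apply: not_derivedn_gadget0.
Qed.

(* Since the towers are closed, intersecting these open sets over [k] leaves
   exactly the towers with all apexes removed. *)
Definition gadget_union_approx S k := [set x | exists n, [/\ S n, slot n x,
  exists a, tower n.+1 a /\ `|x - offset n - a| < dyad k & x - offset n <> apex k]].

Lemma open_gadget_union_approx S k : open (gadget_union_approx S k).
Proof.
apply/openP => x [n [Sn sx [a [Ka ha]] xs]].
have /openP /(_ _ sx) [e2 e20 H2] := @slot_open n.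
have r10 : 0 < dyad k - `|x - offset n - a| by rewrite subr_gt0.
have r30 : 0 < `|x - offset n - apex k| by rewrite normr_gt0 subr_eq0; apply/eqP.
exists (Num.min e2 (Num.min (dyad k - `|x - offset n - a|) `|x - offset n - apex k|)).
  by rewrite !lt_min e20 r10 r30.
move=> y; rewrite !lt_min => /andP[y2 /andP[y1 y3]].
exists n; split=> //; first exact: H2.
  exists a; split=> //.
  have := ler_normD (y - x) (x - offset n - a).
  have -> : y - x + (x - offset n - a) = y - offset n - a by ring.
  by move/le_lt_trans; apply; move: y1; rewrite ltrBrDr.
move=> ys; move: y3; have -> : x - offset n - apex k = - (y - x) by rewrite -ys; ring.
by rewrite normrN ltxx.
Qed.

Lemma gadget_union_approxE S : gadget_union S = \bigcap_k gadget_union_approx S k.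
Proof.
apply/seteqP; split=> [x [n [Sn Gn]] k _|x H].
  exists n; split=> //; first exact: slot_of (gadget_bnd Gn).
    by exists (x - offset n); split; [case: Gn | rewrite subrr normr0 dyad_gt0].
  by case: Gn.
have [n0 [Sn0 sn0 _ _]] := H 0%N Logic.I.
have hk k : exists a, tower n0.+1 a /\ `|x - offset n0 - a| < dyad k.
  by have [nk [_ snk ha _]] := H k Logic.I; rewrite (slot_uniq sn0 snk).
exists n0; split=> //; split.
- apply/(closedP _).1; first exact: tower_closed.
  move=> e e0; have [k hk'] := dyad_lt_eps e0.
  have [a [Ka ha]] := hk k; exists a; split=> //.
  by rewrite distrC; apply: lt_trans hk'.
- move=> j; have [nk [_ snk _ hs]] := H j Logic.I.
  by rewrite (slot_uniq sn0 snk).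
Qed.

Lemma Gdelta_gadget_union S : Gdelta (gadget_union S).
Proof.
exists (gadget_union_approx S); split; first exact: open_gadget_union_approx.
exact: gadget_union_approxE.
Qed.

Lemma countable_image (f : R -> R) A : countable A -> countable (f @` A).
Proof. exact/sub_countable/card_image_le. Qed.

Lemma countable_tower m : countable (tower m).
Proof.
elim: m => [|m IH]; first exact: countable1.
pose F (j : nat) : set R := if j is j'.+1 then shrink j' @` tower m else [set 0].
have sub : tower m.+1 `<=` \bigcup_(j in [set: nat]) F j.
  move=> x [->|[j [y Ky ->]]]; first by exists 0%N.
  by exists j.+1 => //; exists y.
apply: sub_countable (subset_card_le sub) _.
apply: bigcup_countable => [|[|j] _]; first exact: card_lexx.
- exact: countable1.
- exact: countable_image.
Qed.

Lemma countable_gadget_union S : countable (gadget_union S).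
Proof.
have sub : gadget_union S `<=` \bigcup_(n in [set: nat]) (aff (offset n) 1 @` tower n.+1).
  move=> x [n [_ [Kx _]]]; exists n => //; exists (x - offset n) => //.
  by rewrite /aff mul1r addrC subrK.
apply: sub_countable (subset_card_le sub) _.
apply: bigcup_countable => [|n _]; first exact: card_lexx.
exact/countable_image/countable_tower.
Qed.

Lemma infinite_gadget_union S : S 1%N -> infinite_set (gadget_union S).
Proof.
move=> S1; have [Z [ZX Zinf _]] := @not_locally_compact_gadget_union S 0 S1 1 ltr01.
by apply: sub_infinite_set Zinf => z /ZX [].
Qed.

Definition rat_enum (k : nat) : rat := odflt 0%R (unpickle k).

(* The Dedekind cut of [r], shifted to start at [2]; [1] is always included so
   that the coded set is infinite. *)
Definition real_code (r : R) (n : nat) :=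
  n = 1%N \/ exists2 k, n = k.+2 & ratr (rat_enum k) < r.

Definition space_of_real (r : R) := gadget_union (real_code r).

Lemma real_code_gt0 r n : real_code r n -> (0 < n)%N.
Proof. by case=> [->|[k ->]]. Qed.

Lemma real_code1 r : real_code r 1%N. Proof. by left. Qed.

Lemma real_codeSS r k : real_code r k.+2 <-> ratr (rat_enum k) < r.
Proof. by split=> [[//|[k' [->]]]|]; [|right; exists k]. Qed.

Lemma real_code_sep r t : r < t -> exists m, real_code t m.+1 /\ ~ real_code r m.+1.
Proof.
move=> rt; have [q] := rat_in_itvoo rt; rewrite in_itv /= => /andP[rq qt].
exists (pickle q).+1; rewrite !real_codeSS /rat_enum pickleK /=.
by split=> //; rewrite ltNge (ltW rq).
Qed.

Lemma space_of_real_sep r t : r <> t ->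
  exists m, ~ (nlc_point_of_rank m (space_of_real r) <->
              nlc_point_of_rank m (space_of_real t)).
Proof.
have key s m : nlc_point_of_rank m.+1 (space_of_real s) <-> real_code s m.+1.
  exact/nlc_point_of_rank_gadget_union/real_code_gt0.
move=> /eqP; rewrite neq_lt => /orP[rt|tr].
- by have [m [tm rm]] := real_code_sep rt; exists m.+1; rewrite !key; tauto.
- by have [m [rm tm]] := real_code_sep tr; exists m.+1; rewrite !key; tauto.
Qed.

Lemma space_of_real_inj : injective space_of_real.
Proof.
move=> r t e; apply: contrapT => /space_of_real_sep [m]; apply.
by rewrite e.
Qed.

End Construction.

Theorem theorem3 (R : realType) :
  exists H : set (set R),
    [/\ (forall A, H A -> countably_infinite A /\ Gdelta A),
        H #= [set: R] &
        (forall A B, H A -> H B -> A <> B -> ~ homeomorphic_subspaces A B)].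
Proof.
exists [set space_of_real r | r in [set: R]]; split.
- move=> _ [r _ <-]; split; last exact: Gdelta_gadget_union.
  by split; [exact: countable_gadget_union | exact/infinite_gadget_union/real_code1].
- exact: inj_card_eq (in2W (@space_of_real_inj R)).
- move=> _ _ [r _ <-] [t _ <-] neq /homeomorphic_subspaces_homeo [f [g hfg]].
  have [m] := space_of_real_sep (fun rt => neq (congr1 (@space_of_real R) rt)).
  by apply; split; apply: homeo_nlc_point_of_rank; [exact: hfg | exact: homeo_sym hfg].
Qed.
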